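(* For every connected graph $G$ of order $n$, with $m$ edges and maximum degree $\Delta$, we have ${\rm I}_e(G)\le \left\lfloor\frac{m}{2}\right\rfloor+n+\Delta-2$.
   Context: All graphs are finite and simple. A graph is locally irregular if no two adjacent vertices have the same degree. An edge-irregulator of a graph $G$ is a set $S\subseteq E(G)$ such that $G-S$ is locally irregular; ${\rm I}_e(G)$ is the minimum cardinality of an edge-irregulator of $G$. *)

From mathcomp Require Import all_boot.
Set Implicit Arguments. Unset Strict Implicit. Unset Printing Implicit Defensive.

Definition simple_graph (V : finType) (e : rel V) : Prop :=
  symmetric e /\ irreflexive e.

Definition edges (V : finType) (e : rel V) : {set {set V}} :=
  [set [set x; y] | x in V, y in V & e x y].

Definition del_edges (V : finType) (e : rel V) (S : {set {set V}}) : rel V :=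
  fun x y => e x y && ([set x; y] \notin S).

Definition deg (V : finType) (e : rel V) (x : V) : nat := #|[set y | e x y]|.

Definition max_deg (V : finType) (e : rel V) : nat := \max_(x : V) deg e x.

Definition connected (V : finType) (e : rel V) : Prop :=
  forall x y : V, connect e x y.

Definition locally_irregular (V : finType) (e : rel V) : bool :=
  [forall x : V, forall y : V, e x y ==> (deg e x != deg e y)].

Definition edge_irregulator (V : finType) (e : rel V) (S : {set {set V}}) : bool :=
  (S \subset edges e) && locally_irregular (del_edges e S).

Lemma edge_irregulator_exists (V : finType) (e : rel V) :
  exists n, [exists S : {set {set V}}, edge_irregulator e S && (#|S| == n)].
Proof.
exists #|edges e|; apply/existsP; exists (edges e); rewrite eqxx andbT.
rewrite /edge_irregulator subxx /=; apply/forallP => x; apply/forallP => y.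
apply/implyP; rewrite /del_edges => /andP[exy]; case/negP.
by apply/imset2P; exists x y => //; rewrite inE.
Qed.

Definition Ie (V : finType) (e : rel V) : nat :=
  ex_minn (edge_irregulator_exists e).

From mathcomp Require Import all_boot zify.
Set Implicit Arguments. Unset Strict Implicit. Unset Printing Implicit Defensive.

(* Grow the vertex set of G one vertex at a time along edges, keeping a set X
   of grown vertices such that at least half of the edges inside the grown set
   A cross between X and A \ X, and such that every even subset T of A is the
   set of odd-degree vertices of fewer than |A| crossing edges (a T-join; the
   crossing edges contain a spanning tree of A).  A new vertex is put opposite
   to the majority of its neighbours in A, and a crossing edge at it repairs
   the T-joins.
   Given such an X on a set S where X or S \ X has even order, call that side
   Q, let C be the crossing edges and F a T-join fixing the degree parities of
   C: the bipartite graph C \ F has odd degrees exactly on Q, so it is locally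
   irregular, and deleting all other edges costs less than m - |C| + |S|.
   Take S = V when n is odd; otherwise take S = V minus the last vertex grown,
   which has odd order and misses at most Delta of the m edges. *)

Section FinsetFacts.
Variable T : finType.

Lemma card_set1I (z : T) (X : {set T}) : #|[set z] :&: X| = (z \in X).
Proof.
case: (boolP (z \in X)) => zX; first by rewrite (setIidPl _) ?sub1set ?cards1.
by apply/eqP; rewrite cards_eq0 setI_eq0 disjoints1.
Qed.

Lemma card_set2I (x y : T) (X : {set T}) : x != y ->
  #|[set x; y] :&: X| = (x \in X) + (y \in X).
Proof.
move=> nxy; rewrite setIUl cardsU !card_set1I setIACA.
have -> : [set x] :&: [set y] = set0 by apply/eqP; rewrite setI_eq0 disjoints1 inE.
by rewrite set0I cards0 subn0.
Qed.

Lemma set2_inj (x y y' : T) : x != y -> [set x; y] = [set x; y'] -> y = y'.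
Proof.
move=> nxy eq; have : y \in [set x; y'] by rewrite -eq !inE eqxx orbT.
by rewrite !inE eq_sym (negbTE nxy) => /eqP.
Qed.

Lemma odd_card (A : {set T}) : odd #|A| = \big[addb/false]_z (z \in A).
Proof.
rewrite -sum1_card big_mkcond /= (big_morph odd oddD (erefl : odd 0 = false)).
by apply: eq_bigr => z _; case: (z \in A).
Qed.

Lemma odd_card_symdiff (A B : {set T}) :
  odd #|[set z | (z \in A) (+) (z \in B)]| = odd #|A| (+) odd #|B|.
Proof.
by rewrite !odd_card -big_split /=; apply: eq_bigr => z _; rewrite inE.
Qed.

Lemma odd_card_odd (d : T -> nat) : odd #|[set z | odd (d z)]| = odd (\sum_z d z).
Proof.
rewrite odd_card (big_morph odd oddD (erefl : odd 0 = false)).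
by apply: eq_bigr => z _; rewrite inE.
Qed.

Lemma even_side (X S : {set T}) : X \subset S -> odd #|S| ->
  ~~ odd #|X| || ~~ odd #|S :\: X|.
Proof.
move=> XS; rewrite -(cardsID X S) (setIidPr XS) oddD.
by case: (odd #|X|); case: (odd #|S :\: X|).
Qed.

End FinsetFacts.

Section EdgeIrregulator.
Variables (V : finType) (e : rel V).
Hypotheses (esym : symmetric e) (eirr : irreflexive e).

Definition edges_in (A : {set V}) := [set f in edges e | f \subset A].
Definition cut_edges (X A : {set V}) := [set f in edges_in A | #|f :&: X| == 1].
Definition deg_in (F : {set {set V}}) (w : V) := #|[set f in F | w \in f]|.
Definition nbrs_in (v : V) (A : {set V}) := [set y in A | e v y].

Lemma edgesP f : reflect (exists x y, e x y /\ f = [set x; y]) (f \in edges e).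
Proof.
apply: (iffP imset2P) => [[x y _]|[x [y [exy ->]]]].
  by rewrite inE => exy ->; exists x, y.
by exists x y => //; rewrite inE.
Qed.

Lemma mem_edges x y : e x y -> [set x; y] \in edges e.
Proof. by move=> exy; apply/edgesP; exists x, y. Qed.

Lemma adj_neq x y : e x y -> x != y.
Proof. by apply: contraTneq => ->; rewrite eirr. Qed.

Lemma card_edges f : f \in edges e -> #|f| = 2.
Proof. by case/edgesP=> x [y [/adj_neq nxy ->]]; rewrite cards2 nxy. Qed.

Lemma edges_at f x : f \in edges e -> x \in f -> exists2 y, e x y & f = [set x; y].
Proof.
case/edgesP=> a [b [eab ->]]; rewrite !inE => /orP[] /eqP ->; first by exists b.
by exists a; rewrite 1?esym // setUC.
Qed.

Lemma cut_set2 x y (X : {set V}) : x != y ->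
  (#|[set x; y] :&: X| == 1) = ((x \in X) != (y \in X)).
Proof. by move=> nxy; rewrite card_set2I //; case: (x \in X); case: (y \in X). Qed.

Lemma deg_in_sum (F : {set {set V}}) w : deg_in F w = \sum_(f in F) (w \in f).
Proof.
rewrite /deg_in -sum1_card big_mkcond [RHS]big_mkcond /=; apply: eq_bigr => f _.
by rewrite inE; case: (f \in F); case: (w \in f).
Qed.

Lemma deg_in0 w : deg_in set0 w = 0.
Proof. by rewrite deg_in_sum big_set0. Qed.

Lemma deg_in_setU1 (g : {set V}) (F : {set {set V}}) w :
  g \notin F -> deg_in (g |: F) w = (w \in g) + deg_in F w.
Proof. by move=> gF; rewrite !deg_in_sum big_setU1. Qed.

Lemma deg_in_setD (F C : {set {set V}}) w :
  F \subset C -> deg_in C w = deg_in F w + deg_in (C :\: F) w.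
Proof. by move=> FC; rewrite !deg_in_sum (big_setID F) /= (setIidPr FC). Qed.

Lemma sum_deg_in (F : {set {set V}}) : F \subset edges e -> \sum_w deg_in F w = 2 * #|F|.
Proof.
move=> FE; under eq_bigr => w _ do rewrite deg_in_sum.
rewrite exchange_big /= -sum1_card big_distrr /=; apply: eq_bigr => f fF.
rewrite muln1 -(card_edges (subsetP FE f fF)) -sum1_card [RHS]big_mkcond /=.
by apply: eq_bigr => w _; case: (w \in f).
Qed.

Lemma even_card_odd_deg_in (F : {set {set V}}) :
  F \subset edges e -> ~~ odd #|[set w | odd (deg_in F w)]|.
Proof. by move=> FE; rewrite odd_card_odd sum_deg_in // oddM. Qed.

Lemma deg_del_edges (H : {set {set V}}) x : H \subset edges e ->
  deg (del_edges e (edges e :\: H)) x = deg_in H x.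
Proof.
move=> HE; rewrite /deg /deg_in.
have -> : [set f in H | x \in f] =
          [set [set x; y] | y in [set y | del_edges e (edges e :\: H) x y]].
  apply/setP => f; rewrite inE; apply/andP/imsetP => [[fH]|[y]].
    move=> xf; have [y exy fE] := edges_at (subsetP HE f fH) xf.
    by exists y; rewrite // inE /del_edges exy -fE !inE fH.
  rewrite inE /del_edges !inE negb_and negbK => /andP[exy]; rewrite mem_edges //= orbF.
  by move=> yH ->; rewrite yH !inE eqxx.
rewrite card_in_imset // => y y'; rewrite !inE /del_edges => /andP[/adj_neq nxy _] _.
exact: set2_inj.
Qed.

Inductive grown : {set V} -> Prop :=
  | grown1 r : grown [set r]
  | grownU1 A u v : grown A -> u \in A -> v \notin A -> e u v -> grown (v |: A).

Lemma grown_nonempty (A : {set V}) : grown A -> exists a, a \in A.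
Proof. by case=> [r|A' u v _ _ _ _]; [exists r; rewrite set11 | exists v; rewrite setU11]. Qed.

Lemma connect_cross x y (A : {set V}) : connect e x y -> x \in A -> y \notin A ->
  exists u v, [/\ u \in A, v \notin A & e u v].
Proof.
case/connectP=> p; elim: p x => [|z p IH] x /=; first by move=> _ -> ->.
case/andP=> exz pz ly xA yA; case: (boolP (z \in A)) => zA; first exact: IH pz ly zA yA.
by exists x, z.
Qed.

Lemma grown_setT (r : V) : connected e -> grown [set: V].
Proof.
move=> conn.
suff grow n (A : {set V}) : #|V| <= #|A| + n -> grown A -> grown [set: V].
  by apply: (grow #|V| [set r]); [exact: leq_addl | exact: grown1].
elim: n A => [|n IH] A hA gA.
  suff <- : A = [set: V] by [].
  by apply/eqP; rewrite eqEcard subsetT cardsT -(addn0 #|A|).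
case: (eqVneq A [set: V]) => [<- // | AT].
have /subsetPn[w _ wA] : ~~ ([set: V] \subset A) by rewrite subTset.
have [a aA] := grown_nonempty gA.
have [u [v [uA vA euv]]] := connect_cross (conn a w) aA wA.
apply: (IH (v |: A)); last exact: grownU1 gA uA vA euv.
by rewrite cardsU1 vA; lia.
Qed.

Lemma grown_last (A : {set V}) : grown A -> 2 <= #|A| ->
  exists A' u v, [/\ grown A', u \in A', v \notin A', e u v & A = v |: A'].
Proof. by case=> [r|A' u v gA uA vA euv]; [rewrite cards1 | exists A', u, v]. Qed.

Lemma edges_inT : edges_in [set: V] = edges e.
Proof. by apply/setP => f; rewrite inE subsetT andbT. Qed.

Lemma card_edges_in_setU1 (A : {set V}) v : v \notin A ->
  #|edges_in (v |: A)| <= #|edges_in A| + #|nbrs_in v A|.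
Proof.
move=> vA.
have sub : edges_in (v |: A) \subset edges_in A :|: [set [set v; y] | y in nbrs_in v A].
  apply/subsetP => f; rewrite !inE => /andP[fE fvA].
  case: (boolP (v \in f)) => vf.
    have [y evy fvy] := edges_at fE vf; apply/orP; right; apply/imsetP; exists y => //.
    have : y \in v |: A by apply: (subsetP fvA); rewrite fvy !inE eqxx orbT.
    by rewrite !inE evy andbT eq_sym (negbTE (adj_neq evy)).
  rewrite fE; apply/orP; left; apply/subsetP => z zf.
  by have := subsetP fvA z zf; rewrite !inE; case: eqP => // zv; rewrite -zv zf in vf.
apply: leq_trans (subset_leq_card sub) _; apply: leq_trans (leq_card_setU _ _).1 _.
by rewrite leq_add2l leq_imset_card.
Qed.

Definition cross_nbrs (X : {set V}) v (A : {set V}) :=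
  [set y in nbrs_in v A | (y \in X) != (v \in X)].

Definition short_joins (X A : {set V}) :=
  forall T : {set V}, T \subset A -> ~~ odd #|T| ->
  exists F : {set {set V}}, [/\ F \subset cut_edges X A, #|F| < #|A| &
    forall w, odd (deg_in F w) = (w \in T)].

Definition good_cut (X A : {set V}) :=
  [/\ X \subset A, #|edges_in A| <= 2 * #|cut_edges X A| & short_joins X A].

Lemma cut_edgesP (X A : {set V}) f :
  f \in cut_edges X A -> [/\ f \in edges e, f \subset A & #|f :&: X| = 1].
Proof. by rewrite !inE => /andP[/andP[-> ->] /eqP ->]. Qed.

Lemma good_cut1 r : good_cut set0 [set r].
Proof.
split; first exact: sub0set.
  have -> : edges_in [set r] = set0.
    apply/setP => f; rewrite !inE; apply/negbTE; apply/andP => -[fE /subset_leq_card].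
    by rewrite cards1 card_edges.
  by rewrite cards0.
move=> T; rewrite subset1 => /orP[/eqP -> | /eqP ->]; first by rewrite cards1.
by exists set0; split; rewrite ?sub0set ?cards0 ?cards1 // => w; rewrite deg_in0 inE.
Qed.

Lemma cross_edge_cut X v (A : {set V}) y :
  y \in cross_nbrs X v A -> [set v; y] \in cut_edges X (v |: A).
Proof.
rewrite !inE => /andP[/andP[yA evy] cut].
rewrite mem_edges //= cut_set2 ?adj_neq // eq_sym cut andbT.
by apply/subsetP => z; rewrite !inE => /orP[] /eqP ->; rewrite ?eqxx ?yA ?orbT.
Qed.

Section GrowCut.
Variables (A X X' : {set V}) (v : V).
Hypotheses (vA : v \notin A) (agree : forall z, z \in A -> (z \in X') = (z \in X)).

Lemma cut_edges_setU1 : cut_edges X A \subset cut_edges X' (v |: A).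
Proof.
apply/subsetP => f /cut_edgesP[fE fA fX]; rewrite !inE fE (subset_trans fA (subsetUr _ _)) /=.
suff -> : f :&: X' = f :&: X by rewrite fX.
by apply/setP => z; rewrite !inE; case: (boolP (z \in f)) => // /(subsetP fA) /agree.
Qed.

Lemma card_cut_edges_setU1 :
  #|cut_edges X A| + #|cross_nbrs X' v A| <= #|cut_edges X' (v |: A)|.
Proof.
set new := [set [set v; y] | y in cross_nbrs X' v A].
have card_new : #|new| = #|cross_nbrs X' v A|.
  by apply: card_in_imset => y y' /setIdP[/setIdP[_ /adj_neq nvy] _] _; exact: set2_inj.
have disj : [disjoint cut_edges X A & new].
  rewrite -setI_eq0; apply/eqP/setP => f; rewrite in_setI in_set0.
  apply/negP => /andP[/cut_edgesP[_ fA _] /imsetP[y _ fvy]].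
  by move: vA; rewrite (subsetP fA) // fvy !inE eqxx.
rewrite -(leq_card_setU (cut_edges X A) new).2 in disj.
rewrite -card_new -(eqP disj).
apply/subset_leq_card/subUsetP; split; first exact: cut_edges_setU1.
by apply/subsetP => f /imsetP[y /cross_edge_cut ? ->].
Qed.

Lemma short_joins_setU1 w : short_joins X A -> w \in cross_nbrs X' v A ->
  short_joins X' (v |: A).
Proof.
move=> joins wN T TvA Tev; have /setIdP[/setIdP[wA evw] _] := wN.
have inA z : z \in v |: A -> z != v -> z \in A by rewrite !inE => /orP[->|].
case: (boolP (v \in T)) => vT; last first.
  have TA : T \subset A.
    by apply/subsetP => z zT; apply: inA (subsetP TvA z zT) _; apply: contraNneq vT => <-.
  have [F [FC FA Fdeg]] := joins T TA Tev.
  exists F; split => //; first exact: subset_trans FC cut_edges_setU1.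
  by rewrite cardsU1 vA add1n ltnS ltnW.
(* Flip the parity requirement at both ends of the new cut edge [v, w]. *)
set T2 := [set z | (z \in T) (+) (z \in [set v; w])].
have T2A : T2 \subset A.
  apply/subsetP => z; rewrite !inE; case: (eqVneq z v) => [->|zv]; first by rewrite vT.
  case: (eqVneq z w) => [-> //|_] /=; rewrite addbF => zT.
  exact: inA (subsetP TvA z zT) zv.
have T2ev : ~~ odd #|T2| by rewrite odd_card_symdiff cards2 adj_neq //= addbF.
have [F [FC FA Fdeg]] := joins T2 T2A T2ev.
have vwF : [set v; w] \notin F.
  apply: contra vA => /(subsetP FC) /cut_edgesP[_ /subsetP-> //]; exact: set21.
exists ([set v; w] |: F); split.
- apply/subsetP => f /setU1P[-> | /(subsetP FC) /(subsetP cut_edges_setU1) //].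
  exact: cross_edge_cut.
- by rewrite !cardsU1 vwF vA.
- move=> z; rewrite deg_in_setU1 // oddD Fdeg !inE oddb.
  by case: (z \in T); case: (_ || _).
Qed.

Lemma good_cut_setU1 : good_cut X A -> X' \subset v |: A -> 0 < #|nbrs_in v A| ->
  #|nbrs_in v A| <= 2 * #|cross_nbrs X' v A| -> good_cut X' (v |: A).
Proof.
move=> [XA cutA joins] X'vA N0 Ncross; split => //.
  apply: leq_trans (card_edges_in_setU1 vA) _.
  by apply: leq_trans (leq_mul (leqnn 2) card_cut_edges_setU1); rewrite mulnDr leq_add.
have /set0Pn[w wN] : cross_nbrs X' v A != set0 by rewrite -card_gt0; lia.
exact: short_joins_setU1 joins wN.
Qed.
End GrowCut.

Lemma good_cut_step (A X : {set V}) u v :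
  good_cut X A -> u \in A -> v \notin A -> e u v -> exists X', good_cut X' (v |: A).
Proof.
move=> gX uA vA euv; have [XA _ _] := gX.
have vX : v \notin X by apply: contra vA; exact: (subsetP XA).
have N0 : 0 < #|nbrs_in v A| by rewrite card_gt0; apply/set0Pn; exists u; rewrite !inE uA esym.
have splitN := cardsID X (nbrs_in v A).
case: (leqP #|nbrs_in v A :\: X| #|nbrs_in v A :&: X|) => majority.
  exists X; apply: good_cut_setU1 gX _ N0 _ => //; first exact: subset_trans XA (subsetUr _ _).
  suff -> : cross_nbrs X v A = nbrs_in v A :&: X by lia.
  by apply/setP => y; rewrite !inE (negbTE vX); case: (y \in X).
have agree z : z \in A -> (z \in v |: X) = (z \in X).
  by move=> zA; rewrite !inE; case: eqVneq => // zv; rewrite -zv zA in vA.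
exists (v |: X); apply: good_cut_setU1 gX _ N0 _ => //; first exact: setUS.
suff -> : cross_nbrs (v |: X) v A = nbrs_in v A :\: X by lia.
apply/setP => y; rewrite !inE eqxx /=; case: (eqVneq y v) => [->|_] /=.
  by rewrite (negbTE vA) andbF /= andbF.
by case: (y \in X); rewrite /= ?andbT ?andbF.
Qed.

Lemma good_cut_grown (S : {set V}) : grown S -> exists X, good_cut X S.
Proof.
elim=> [r|A u v _ [X gX] uA vA euv]; first by exists set0; exact: good_cut1.
exact: good_cut_step gX uA vA euv.
Qed.

Lemma Ie_le (S : {set {set V}}) : edge_irregulator e S -> Ie e <= #|S|.
Proof.
move=> irrS; rewrite /Ie; case: ex_minnP => m _; apply.
by apply/existsP; exists S; rewrite irrS eqxx.
Qed.

Lemma cut_edges_sub (X A : {set V}) : cut_edges X A \subset edges e.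
Proof. by apply/subsetP => f /cut_edgesP[]. Qed.

Lemma irregulator_odd_deg (H : {set {set V}}) : H \subset edges e ->
  (forall x y, e x y -> [set x; y] \in H -> odd (deg_in H x) != odd (deg_in H y)) ->
  edge_irregulator e (edges e :\: H).
Proof.
move=> HE Hodd; rewrite /edge_irregulator subsetDl /=.
apply/forallP => x; apply/forallP => y; apply/implyP => /andP[exy].
rewrite !inE mem_edges // andbT negbK => xyH.
by rewrite !deg_del_edges //; apply: contraNneq (Hodd x y exy xyH) => ->.
Qed.

Lemma parity_subgraph (X S Q : {set V}) : good_cut X S -> Q \subset S -> ~~ odd #|Q| ->
  exists H : {set {set V}}, [/\ H \subset cut_edges X S, #|cut_edges X S| < #|H| + #|S| &
    forall z, odd (deg_in H z) = (z \in Q)].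
Proof.
move=> [_ _ joins] QS Qev; set C := cut_edges X S.
(* Deleting a T-join F from C flips the degree parities exactly on T. *)
set T := [set z | (z \in [set w | odd (deg_in C w)]) (+) (z \in Q)].
have TS : T \subset S.
  apply/subsetP => z; rewrite !inE; apply: contraTT => zS.
  have -> : z \in Q = false by apply: contraNF zS; exact: (subsetP QS).
  rewrite deg_in_sum big1 // => f /cut_edgesP[_ /subsetP fS _].
  by apply/eqP; rewrite eqb0; apply: contra zS; exact: fS.
have Tev : ~~ odd #|T|.
  by rewrite odd_card_symdiff (negbTE (even_card_odd_deg_in (cut_edges_sub X S))) (negbTE Qev).
have [F [FC FS Fdeg]] := joins T TS Tev.
exists (C :\: F); split; first exact: subsetDl.
  by rewrite cardsDS //; have := subset_leq_card FC; lia.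
move=> z; have := congr1 odd (deg_in_setD z FC); rewrite oddD Fdeg !inE.
by case: (odd (deg_in C z)); case: (z \in Q); case: (odd _).
Qed.

Lemma Ie_good_cut (X S : {set V}) : good_cut X S -> ~~ odd #|X| || ~~ odd #|S :\: X| ->
  Ie e + #|cut_edges X S| < #|edges e| + #|S|.
Proof.
move=> gX evenX; have [XS _ _] := gX.
set Q := if ~~ odd #|X| then X else S :\: X.
have QS : Q \subset S by rewrite /Q; case: ifP => _ //; exact: subsetDl.
have Qev : ~~ odd #|Q| by rewrite /Q; case: ifP => // oddX; rewrite oddX in evenX.
have sideQ x y : x \in S -> y \in S -> (x \in X) != (y \in X) -> (x \in Q) != (y \in Q).
  rewrite /Q; case: ifP => _ // xS yS; rewrite !inE xS yS !andbT.
  by case: (x \in X); case: (y \in X).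
have [H [HC CH Hdeg]] := parity_subgraph gX QS Qev.
have HE : H \subset edges e := subset_trans HC (cut_edges_sub X S).
have irr : edge_irregulator e (edges e :\: H).
  apply: irregulator_odd_deg => // x y exy /(subsetP HC) /cut_edgesP[_ /subsetP xyS].
  move/eqP; rewrite cut_set2 ?adj_neq // !Hdeg; apply: sideQ; apply: xyS.
    exact: set21.
  exact: set22.
have := Ie_le irr; rewrite cardsDS //; have := subset_leq_card HE; lia.
Qed.

Lemma deg_le_max_deg v : deg e v <= max_deg e.
Proof. exact: (leq_bigmax v). Qed.

Lemma card_nbrs_in_le_max_deg v (A : {set V}) : #|nbrs_in v A| <= max_deg e.
Proof.
apply: leq_trans (deg_le_max_deg v); apply/subset_leq_card/subsetP => y.
by rewrite !inE => /andP[].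
Qed.

Lemma max_deg_gt0 u v : e u v -> 0 < max_deg e.
Proof.
move=> euv; apply: leq_trans (deg_le_max_deg u).
by rewrite card_gt0; apply/set0Pn; exists v; rewrite inE.
Qed.

End EdgeIrregulator.

Theorem theorem7 (V : finType) (e : rel V) :
  simple_graph e -> connected e -> 2 <= #|V| ->
  Ie e <= #|edges e| %/ 2 + #|V| + max_deg e - 2.
Proof.
move=> [esym eirr] conn V2.
have [r _] : exists r : V, r \in [set: V] by apply/set0Pn; rewrite -card_gt0 cardsT; lia.
have gV := grown_setT r conn.
have [A [u [v [gA uA vA euv AV]]]] : exists A u v,
    [/\ grown e A, u \in A, v \notin A, e u v & [set: V] = v |: A].
  by apply: grown_last gV _; rewrite cardsT.
have maxdeg_gt0 := max_deg_gt0 euv.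
have cardA : #|V| = #|A|.+1 by rewrite -cardsT AV cardsU1 vA.
case: (boolP (odd #|V|)) => oddV.
  have [X gX] := good_cut_grown esym eirr gV; have [XV cutV _] := gX.
  have oddT : odd #|[set: V]| by rewrite cardsT.
  have := Ie_good_cut esym eirr gX (even_side XV oddT).
  by rewrite edges_inT cardsT in cutV *; lia.
have [X gX] := good_cut_grown esym eirr gA; have [XA cutA _] := gX.
have oddA : odd #|A| by move: oddV; rewrite cardA /= negbK.
have := Ie_good_cut esym eirr gX (even_side XA oddA).
have := card_edges_in_setU1 esym eirr vA; rewrite -AV edges_inT.
have := card_nbrs_in_le_max_deg e v A.
lia.
Qed.
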